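(* Let $A$ be a positively graded commutative coherent ring, let $E$ be an indecomposable injective graded $A$-module, and let $P(E)$ be the sum of annihilator ideals of non-zero homogeneous elements of $E$. Then $E$ and $E_{P(E)}$ are topologically indistinguishable in $\operatorname{inj}_{\mathrm{zg}}A$ and in $\operatorname{inj}_{\mathrm{zar}}A$; that is, for every $M\in\operatorname{gr}A$, $\mathcal Hom_A(M,E)\ne0$ if and only if $\mathcal Hom_A(M,E_{P(E)})\ne0$.
   Context: All rings are commutative with unit; $A=\bigoplus_{j\ge0}A_j$. $\operatorname{Gr}A$: graded $A$-modules, shifts $M(n)_j=M_{n+j}$; $\operatorname{gr}A$: finitely presented graded modules; $A$ coherent means every finitely generated graded ideal is finitely presented. $\mathcal Hom_A(M,N)=\bigoplus_{n\in\mathbb Z}\operatorname{Gr}A(M,N(n))$. $\operatorname{inj}A$: isomorphism classes of indecomposable injective objects of $\operatorname{Gr}A$. For a homogeneous prime $P$, $E_P$ is the injective hull of $A/P$ in $\operatorname{Gr}A$. $\operatorname{inj}_{\mathrm{zar}}A$: $\operatorname{inj}A$ with basis of opens $[M]=\{E\mid\mathcal Hom_A(M,E)=0\}$, $M\in\operatorname{gr}A$; $\operatorname{inj}_{\mathrm{zg}}A$: $\operatorname{inj}A$ with basis of opens $(M)=\{E\mid\mathcal Hom_A(M,E)\ne0\}$, $M\in\operatorname{gr}A$. *)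

From HB Require Import structures.
From mathcomp Require Import all_boot all_order all_algebra.
Set Implicit Arguments. Unset Strict Implicit. Unset Printing Implicit Defensive.
Import Order.TTheory GRing.Theory Num.Theory.
Local Open Scope ring_scope.

Definition graded_decomp (V : zmodType) (G : int -> pred V) : Prop :=
  (forall n, (0 : V) \in G n) /\
  (forall n (x y : V), x \in G n -> y \in G n -> x - y \in G n) /\
  (forall x : V, exists (s : seq int) (c : int -> V),
      uniq s /\ (forall n, c n \in G n) /\ x = \sum_(n <- s) c n) /\
  (forall (s : seq int) (c : int -> V), uniq s -> (forall n, c n \in G n) ->
      \sum_(n <- s) c n = 0 -> forall n, n \in s -> c n = 0).

(** A positively graded commutative ring A = (+)_{j >= 0} A_j, encoded as a
    Z-grading with A_n = 0 for n < 0. *)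
Definition pos_graded_ring (A : comNzRingType) (GA : int -> pred A) : Prop :=
  graded_decomp GA /\ (1 : A) \in GA 0 /\
  (forall i j (a b : A), a \in GA i -> b \in GA j -> a * b \in GA (i + j)) /\
  (forall n : int, n < 0 -> forall a, a \in GA n -> a = 0).

Definition graded_module (A : comNzRingType) (GA : int -> pred A)
    (V : lmodType A) (GV : int -> pred V) : Prop :=
  graded_decomp GV /\
  (forall i n (a : A) (x : V), a \in GA i -> x \in GV n -> a *: x \in GV (i + n)).

Definition homogeneous (V : zmodType) (GV : int -> pred V) (x : V) : Prop :=
  exists n, x \in GV n.

Definition graded_submodule (A : comNzRingType) (V : lmodType A)
    (GV : int -> pred V) (U : V -> Prop) : Prop :=
  U 0 /\ (forall x y, U x -> U y -> U (x - y)) /\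
  (forall (a : A) x, U x -> U (a *: x)) /\
  (forall (s : seq int) (c : int -> V), uniq s -> (forall n, c n \in GV n) ->
      U (\sum_(n <- s) c n) -> forall n, n \in s -> U (c n)).

(** f is a morphism of graded modules M -> N(d), i.e. an element of
    Gr A(M, N(d)), where N(d)_j = N_(d+j). *)
Definition graded_map_deg (A : comNzRingType) (M N : lmodType A)
    (GM : int -> pred M) (GN : int -> pred N) (d : int) (f : {linear M -> N}) : Prop :=
  forall j x, x \in GM j -> f x \in GN (d + j).

(** HomA(M,N) = (+)_n Gr A(M, N(n)) is non-zero. *)
Definition gHom_nonzero (A : comNzRingType) (M N : lmodType A)
    (GM : int -> pred M) (GN : int -> pred N) : Prop :=
  exists (d : int) (f : {linear M -> N}), graded_map_deg GM GN d f /\ exists x, f x != 0.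

Definition gr_injective (A : comNzRingType) (GA : int -> pred A)
    (E : lmodType A) (GE : int -> pred E) : Prop :=
  forall (X Y : lmodType A) (GX : int -> pred X) (GY : int -> pred Y),
    graded_module GA GX -> graded_module GA GY ->
    forall (i : {linear X -> Y}) (f : {linear X -> E}),
      graded_map_deg GX GY 0 i -> injective i -> graded_map_deg GX GE 0 f ->
      exists g : {linear Y -> E}, graded_map_deg GY GE 0 g /\ forall x, g (i x) = f x.

Definition gr_indecomposable (A : comNzRingType) (E : lmodType A) (GE : int -> pred E) : Prop :=
  (exists x : E, x != 0) /\
  forall U W : E -> Prop, graded_submodule GE U -> graded_submodule GE W ->
    (forall x, U x -> W x -> x = 0) ->
    (forall x, exists u w, U u /\ W w /\ x = u + w) ->
    (forall x, U x -> x = 0) \/ (forall x, W x -> x = 0).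

Definition P_of (A : comNzRingType) (E : lmodType A) (GE : int -> pred E) : A -> Prop :=
  fun a => exists s : seq (A * E),
    (forall p, p \in s -> p.2 != 0 /\ homogeneous GE p.2 /\ p.1 *: p.2 = 0) /\
    a = \sum_(p <- s) p.1.

(** A degree-0 graded monomorphism
    A/I -> E' is the same thing as an element e of E'_0 with Ann(e) = I
    (namely the image of 1 + I); essentiality means every non-zero graded
    submodule of E' meets its image A e non-trivially. *)
Definition gr_injective_hull_of_quotient (A : comNzRingType) (GA : int -> pred A)
    (I : A -> Prop) (E' : lmodType A) (GE' : int -> pred E') : Prop :=
  graded_module GA GE' /\ gr_injective GA GE' /\
  exists e : E', e \in GE' 0 /\ (forall a : A, a *: e = 0 <-> I a) /\
    forall U : E' -> Prop, graded_submodule GE' U -> (exists x, U x /\ x != 0) ->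
      exists a : A, a *: e != 0 /\ U (a *: e).

(** The graded submodule U of V is finitely presented (as a graded module):
    there is an exact sequence (+)_k A(-b_k) -> (+)_j A(-c_j) -> U -> 0 of
    degree-0 maps, written out elementwise: homogeneous generators g_j of
    degree c_j, and finitely many homogeneous relations r_k (of degree b_k)
    generating the module of all relations. *)
Definition gr_fin_pres_sub (A : comNzRingType) (GA : int -> pred A)
    (V : lmodType A) (GV : int -> pred V) (U : V -> Prop) : Prop :=
  exists (n : nat) (g : 'I_n -> V) (c : 'I_n -> int),
    (forall j, U (g j) /\ g j \in GV (c j)) /\
    (forall x, U x -> exists a : 'I_n -> A, x = \sum_j a j *: g j) /\
    exists (m : nat) (r : 'I_m -> 'I_n -> A) (b : 'I_m -> int),
      (forall k j, r k j \in GA (b k - c j)) /\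
      (forall k, \sum_j r k j *: g j = 0) /\
      (forall a : 'I_n -> A, \sum_j a j *: g j = 0 ->
         exists t : 'I_m -> A, forall j, a j = \sum_k t k * r k j).

Definition gr_fin_pres (A : comNzRingType) (GA : int -> pred A)
    (M : lmodType A) (GM : int -> pred M) : Prop :=
  gr_fin_pres_sub GA GM (fun _ => True).

Definition gr_coherent (A : comNzRingType) (GA : int -> pred A) : Prop :=
  forall I : A -> Prop, graded_submodule (V := A^o) GA I ->
    (exists (n : nat) (g : 'I_n -> A), (forall j, I (g j)) /\
        forall x, I x -> exists a : 'I_n -> A, x = \sum_j a j * g j) ->
    gr_fin_pres_sub (V := A^o) GA GA I.

(* (=>) If f : M -> E(d) is non-zero, choose a homogeneous m with f m <> 0.  Then
   Ann(m) <= Ann(f m) <= P(E) = Ann(e), where e is the image of 1 in E_P(E), so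
   the injectivity of E_P(E) extends m |-> e to a map M -> E_P(E)(d').
   (<=) The image of a non-zero f : M -> E_P(E)(d) meets A e, giving homogeneous m
   and a with f m = a e <> 0.  By coherence, Ann(m) is generated by finitely many
   b_l; the b_l a lie in P(E).  An indecomposable injective E is uniform, so
   finitely many elements of P(E) kill a common homogeneous z <> 0.  Then a z <> 0
   (else a would lie in P(E)) and Ann(m) <= Ann(a z), so m |-> a z extends to
   M -> E(d''). *)

From HB Require Import structures.
From mathcomp Require Import all_boot all_order all_algebra.
From mathcomp Require Import boolp classical_sets zify.
Set Implicit Arguments. Unset Strict Implicit. Unset Printing Implicit Defensive.
Import Order.TTheory GRing.Theory Num.Theory.
Local Open Scope ring_scope.

Section HomogeneousComponents.
Variables (V : zmodType) (G : int -> pred V) (hG : graded_decomp G).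

Lemma graded0 n : (0 : V) \in G n. Proof. by case: hG. Qed.

Lemma gradedB n x y : x \in G n -> y \in G n -> x - y \in G n.
Proof. by case: hG => _ [h _]; apply: h. Qed.

Lemma gradedD n x y : x \in G n -> y \in G n -> x + y \in G n.
Proof.
move=> hx hy; rewrite -[y]opprK; apply: gradedB => //.
by rewrite -sub0r; apply: gradedB => //; apply: graded0.
Qed.

Lemma graded_indep (s : seq int) (c : int -> V) : uniq s -> (forall n, c n \in G n) ->
  \sum_(n <- s) c n = 0 -> forall n, n \in s -> c n = 0.
Proof. by case: hG => _ [_ [_ h]]; apply: h. Qed.

Lemma graded_decomp_ex x : exists sc : seq int * (int -> V),
  [/\ uniq sc.1, forall n, sc.2 n \in G n & x = \sum_(n <- sc.1) sc.2 n].
Proof. by case: hG => _ [_ [h _]]; have [s [c [? [? ?]]]] := h x; exists (s, c). Qed.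

Definition hdec x := proj1_sig (cid (graded_decomp_ex x)).

(* Read off a chosen decomposition; [hcompE] shows that the choice does not matter. *)
Definition hcomp (n : int) (x : V) : V :=
  if n \in (hdec x).1 then (hdec x).2 n else 0.

Lemma hdec_uniq x : uniq (hdec x).1.
Proof. by case: (proj2_sig (cid (graded_decomp_ex x))). Qed.

Lemma hcomp_in n x : hcomp n x \in G n.
Proof.
rewrite /hcomp; case: ifP => _; last exact: graded0.
by case: (proj2_sig (cid (graded_decomp_ex x))).
Qed.

Lemma hcomp_out n x : n \notin (hdec x).1 -> hcomp n x = 0.
Proof. by rewrite /hcomp => /negPf ->. Qed.

Lemma hcomp_sum_dec x : x = \sum_(n <- (hdec x).1) hcomp n x.
Proof.
case: (proj2_sig (cid (graded_decomp_ex x))) => _ _ e.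
by rewrite {1}e /hcomp; apply: eq_big_seq => n ->.
Qed.

Lemma big_mask_mem (s t : seq int) (c : int -> V) : uniq s -> uniq t -> {subset s <= t} ->
  \sum_(n <- t) (if n \in s then c n else 0) = \sum_(n <- s) c n.
Proof.
move=> us ut st; rewrite -big_mkcond /= -big_filter.
apply: perm_big; apply: uniq_perm => //; first exact: filter_uniq.
by move=> n; rewrite mem_filter; case: (boolP (n \in s)) => // /st ->.
Qed.

Lemma hcomp_sum_sup x (t : seq int) : uniq t -> {subset (hdec x).1 <= t} ->
  x = \sum_(n <- t) hcomp n x.
Proof.
move=> ut st; rewrite {1}(hcomp_sum_dec x) -(big_mask_mem (hcomp^~ x) (hdec_uniq x) ut st).
by apply: eq_bigr => m _; case: ifP => // /negbT /hcomp_out ->.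
Qed.

Lemma hcompE (s : seq int) (c : int -> V) x : uniq s -> (forall n, c n \in G n) ->
  x = \sum_(n <- s) c n -> forall n, hcomp n x = if n \in s then c n else 0.
Proof.
move=> us hc ex n; set t := undup (s ++ (hdec x).1).
have ut : uniq t by apply: undup_uniq.
pose d m := (if m \in s then c m else 0) - hcomp m x.
have hd m : d m \in G m.
  by apply: gradedB; [case: ifP => _; [apply: hc | apply: graded0] | apply: hcomp_in].
have sd : \sum_(m <- t) d m = 0.
  rewrite big_split /= sumrN big_mask_mem //; last by move=> m hm; rewrite mem_undup mem_cat hm.
  rewrite -hcomp_sum_sup // -?ex ?subrr // => m hm.
  by rewrite mem_undup mem_cat hm orbT.
have [nt|] := boolP (n \in t).
  by move/eqP: (graded_indep ut hd sd nt); rewrite subr_eq0 => /eqP ->.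
rewrite mem_undup mem_cat negb_or => /andP[ns nd].
by rewrite (negPf ns) hcomp_out.
Qed.

Lemma hcompE_shift (s : seq int) (c : int -> V) (j : int) x : uniq s ->
  (forall n, c n \in G (n + j)) -> x = \sum_(n <- s) c n ->
  forall m, hcomp m x = if m - j \in s then c (m - j) else 0.
Proof.
move=> us hc ex m.
have inj : injective (fun n : int => n + j) by move=> a b /addIr.
have hc' k : c (k - j) \in G k by have := hc (k - j); rewrite subrK.
have e : x = \sum_(n <- map (fun n => n + j) s) c (n - j).
  by rewrite big_map ex; apply: eq_bigr => n _; rewrite addrK.
rewrite (hcompE _ hc' e) ?(map_inj_uniq inj) //.
by rewrite -[m in m \in _](subrK j) (mem_map inj).
Qed.

Lemma hcomp_homog m x : x \in G m -> forall n, hcomp n x = if n == m then x else 0.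
Proof.
move=> hx n; pose c k := if k == m then x else 0.
have hc k : c k \in G k by rewrite /c; case: eqP => [->|_] //; apply: graded0.
rewrite (@hcompE [:: m] c x) //; first by rewrite inE /c; case: eqP.
by rewrite big_seq1 /c eqxx.
Qed.

Lemma hcomp_id m x : x \in G m -> hcomp m x = x.
Proof. by move/hcomp_homog => ->; rewrite eqxx. Qed.

Lemma hcomp0 n : hcomp n 0 = 0.
Proof. by rewrite (hcomp_homog (graded0 0)); case: ifP. Qed.

Lemma hcompD n x y : hcomp n (x + y) = hcomp n x + hcomp n y.
Proof.
set t := undup ((hdec x).1 ++ (hdec y).1).
have ut : uniq t by apply: undup_uniq.
have e : x + y = \sum_(m <- t) (hcomp m x + hcomp m y).
  rewrite big_split /= -!hcomp_sum_sup // => m hm; by rewrite mem_undup mem_cat hm ?orbT.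
rewrite (hcompE ut _ e); last by move=> m; apply: gradedD; apply: hcomp_in.
case: ifP => // /negbT; rewrite mem_undup mem_cat negb_or => /andP[h1 h2].
by rewrite !hcomp_out // addr0.
Qed.

Lemma hcomp_sum I (r : seq I) (F : I -> V) n :
  hcomp n (\sum_(i <- r) F i) = \sum_(i <- r) hcomp n (F i).
Proof.
elim: r => [|i r IH]; first by rewrite !big_nil hcomp0.
by rewrite !big_cons hcompD IH.
Qed.

Lemma hcomp_neq0 x : x != 0 -> exists n, hcomp n x != 0.
Proof.
move=> nx; apply/not_existsP => h; move/eqP: nx; apply.
rewrite (hcomp_sum_dec x); apply: big1 => n _.
by apply/eqP; apply/negPn/negP => hn; apply: (h n).
Qed.

End HomogeneousComponents.

Section GradedModule.
Variables (A : comNzRingType) (GA : int -> pred A) (hA : pos_graded_ring GA).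

Definition ring_decomp : graded_decomp GA := hA.1.

Lemma graded_mul i j (a b : A) : a \in GA i -> b \in GA j -> a * b \in GA (i + j).
Proof. by case: hA => _ [_ [h _]]; apply: h. Qed.

Lemma hcompMr x y d n : y \in GA d -> hcomp ring_decomp n (x * y) = hcomp ring_decomp (n - d) x * y.
Proof.
move=> hy; have e : x * y = \sum_(k <- (hdec ring_decomp x).1) hcomp ring_decomp k x * y.
  by rewrite -mulr_suml -hcomp_sum_dec.
rewrite (hcompE_shift ring_decomp (j := d) (hdec_uniq _ x) _ e).
  by case: ifP => // /negbT /hcomp_out ->; rewrite mul0r.
by move=> k; apply: graded_mul => //; apply: hcomp_in.
Qed.

Variables (V : lmodType A) (GV : int -> pred V) (hV : graded_module GA GV).

Definition mod_decomp : graded_decomp GV := hV.1.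

Lemma graded_scale i n a x : a \in GA i -> x \in GV n -> a *: x \in GV (i + n).
Proof. by case: hV => _ h; apply: h. Qed.

Lemma hcompZr j a x n : x \in GV j ->
  hcomp mod_decomp n (a *: x) = hcomp ring_decomp (n - j) a *: x.
Proof.
move=> hx; have e : a *: x = \sum_(k <- (hdec ring_decomp a).1) hcomp ring_decomp k a *: x.
  by rewrite -scaler_suml -hcomp_sum_dec.
rewrite (hcompE_shift mod_decomp (j := j) (hdec_uniq _ a) _ e).
  by case: ifP => // /negbT /hcomp_out ->; rewrite scale0r.
by move=> k; apply: graded_scale => //; apply: hcomp_in.
Qed.

End GradedModule.

Lemma hcomp_map (A : comNzRingType) (M N : lmodType A) (GM : int -> pred M) (GN : int -> pred N)
  (hM : graded_decomp GM) (hN : graded_decomp GN) d (f : {linear M -> N}) :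
  graded_map_deg GM GN d f -> forall x n, hcomp hN n (f x) = f (hcomp hM (n - d) x).
Proof.
move=> hf x n.
have e : f x = \sum_(k <- (hdec hM x).1) f (hcomp hM k x).
  by rewrite {1}(hcomp_sum_dec hM x) linear_sum.
rewrite (hcompE_shift hN (j := d) (hdec_uniq hM x) _ e).
  by case: ifP => // /negbT /hcomp_out ->; rewrite linear0.
by move=> k; rewrite addrC; apply: hf; apply: hcomp_in.
Qed.

Section Submodule.
Variables (A : comNzRingType) (V : lmodType A).

Definition submod_pred (U : V -> Prop) :=
  [/\ U 0, forall x y, U x -> U y -> U (x - y) & forall (a : A) x, U x -> U (a *: x)].

Lemma submod_predD U x y : submod_pred U -> U x -> U y -> U (x + y).
Proof.
case=> U0 UB _ Ux Uy; rewrite -[y]opprK; apply: (UB) => //.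
by rewrite -sub0r; apply: UB.
Qed.

Lemma submod_pred_lin U a x y : submod_pred U -> U x -> U y -> U (a *: x + y).
Proof. by move=> hU Ux Uy; apply: submod_predD => //; case: hU => _ _; apply. Qed.

Variables (U : V -> Prop) (hU : submod_pred U).

Definition sub_pred : pred V := fun x => `[< U x >].
Definition sub_carrier := {x : V | sub_pred x}.
HB.instance Definition _ := [isSub of sub_carrier for @sval _ sub_pred].
HB.instance Definition _ := [Choice of sub_carrier by <:].

Lemma sub_pred_closed : subsemimod_closed sub_pred.
Proof.
apply: GRing.submod_closed_semi; split; first by apply/asboolP; case: hU.
by move=> a u v /asboolP hu /asboolP hv; apply/asboolP; apply: submod_pred_lin.
Qed.

HB.instance Definition _ :=
  GRing.SubChoice_isSubLmodule.Build A V sub_pred sub_carrier sub_pred_closed.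

Definition sub_lmod : lmodType A := sub_carrier.
Definition sub_val : {linear sub_lmod -> V} := val.

Lemma sub_valP (x : sub_lmod) : U (sub_val x).
Proof. by have /asboolP := valP x. Qed.

Definition sub_mk x (Ux : U x) : sub_lmod := exist _ x (asboolT Ux).

Variables (W : lmodType A) (h : V -> W)
  (h_lin : forall a u v, U u -> U v -> h (a *: u + v) = a *: h u + h v).

Definition sub_restr (x : sub_lmod) : W := h (val x).

Lemma sub_restr_is_linear : linear sub_restr.
Proof.
by move=> a x y; rewrite /sub_restr -h_lin //; apply: sub_valP.
Qed.

HB.instance Definition _ := GRing.isLinear.Build A sub_lmod W *:%R sub_restr sub_restr_is_linear.

Definition sub_restr_linear : {linear sub_lmod -> W} := sub_restr.

End Submodule.

Section GradedSubmodule.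
Variables (A : comNzRingType) (V : lmodType A) (GV : int -> pred V) (hd : graded_decomp GV).

Definition gsubmod (U : V -> Prop) :=
  submod_pred U /\ forall x n, U x -> U (hcomp hd n x).

Lemma gsubmod_graded U : gsubmod U -> graded_submodule GV U.
Proof.
case=> -[U0 UB UZ] UC; do 3!split => //.
by move=> s c us hc hU n ns; have := UC _ n hU; rewrite (hcompE hd us hc erefl) ns.
Qed.

End GradedSubmodule.

Lemma image_gsubmod (A : comNzRingType) (M N : lmodType A) (GM : int -> pred M)
  (GN : int -> pred N) (hM : graded_decomp GM) (hN : graded_decomp GN) d (f : {linear M -> N}) :
  graded_map_deg GM GN d f -> gsubmod hN (fun w => exists u, w = f u).
Proof.
move=> hf; split; first split.
- by exists 0; rewrite linear0.
- by move=> _ _ [u1 ->] [u2 ->]; exists (u1 - u2); rewrite linearB.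
- by move=> a _ [u ->]; exists (a *: u); rewrite linearZ.
- by move=> _ n [u ->]; exists (hcomp hM (n - d) u); rewrite (hcomp_map hM hN hf).
Qed.

Section GradedConstructions.
Variables (A : comNzRingType) (GA : int -> pred A).
Variables (V : lmodType A) (GV : int -> pred V) (hV : graded_module GA GV).

Lemma sub_graded U (hU : gsubmod (mod_decomp hV) U) :
  graded_module GA (fun n => [pred x | sub_val hU.1 x \in GV n]).
Proof.
pose hd := mod_decomp hV; set f := sub_val hU.1.
split; last by move=> i n a x ha; rewrite !inE linearZ; apply: (graded_scale hV ha).
split; first by move=> n; rewrite inE raddf0; apply: (graded0 hd).
split; first by move=> n x y; rewrite !inE raddfB; apply: (gradedB hd).
split.
  move=> x; have Ux := sub_valP x.
  exists (hdec hd (f x)).1, (fun n => sub_mk hU.1 (hU.2 _ n Ux)).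
  split; first exact: hdec_uniq.
  split; first by move=> n; rewrite inE; apply: hcomp_in.
  by apply: val_inj; rewrite -[val _]/(f _) raddf_sum {1}(hcomp_sum_dec hd (f x)).
move=> s c us hc e n ns; apply: val_inj; rewrite -[val _]/(f _) raddf0.
apply: (graded_indep hd us (c := fun k => f (c k))) => //.
by rewrite -raddf_sum e raddf0.
Qed.

Lemma shift_graded (d : int) : graded_module GA (fun n => GV (n + d)).
Proof.
pose hd := mod_decomp hV.
have inj : injective (fun n : int => n + d) by move=> a b /addIr.
split; last by move=> i n a x ha hx; rewrite -addrA; apply: (graded_scale hV ha hx).
split; first by move=> n; apply: (graded0 hd).
split; first by move=> n x y; apply: (gradedB hd).
split.
  move=> x; exists (map (fun n => n - d) (hdec hd x).1), (fun n => hcomp hd (n + d) x).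
  split; first by rewrite map_inj_uniq ?hdec_uniq // => a b /addIr.
  split; first by move=> n; apply: hcomp_in.
  by rewrite big_map {1}(hcomp_sum_dec hd x); apply: eq_bigr => n _; rewrite subrK.
move=> s c us hc e n ns.
have hc' k : c (k - d) \in GV k by have := hc (k - d); rewrite subrK.
have := @graded_indep _ _ hd (map (fun k => k + d) s) _ _ hc' _ (n + d).
rewrite addrK (mem_map inj) map_inj_uniq //; apply => //.
by rewrite big_map -[RHS]e; apply: eq_bigr => i _; rewrite addrK.
Qed.

End GradedConstructions.

Section CyclicAndSumSubmodules.
Variables (A : comNzRingType) (V : lmodType A) (GV : int -> pred V) (hd : graded_decomp GV).

Definition cyclic_submod (m : V) (x : V) := exists r : A, x = r *: m.

Lemma cyclic_submodP m : submod_pred (cyclic_submod m).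
Proof.
split; first by exists 0; rewrite scale0r.
  by move=> _ _ [r1 ->] [r2 ->]; exists (r1 - r2); rewrite scalerBl.
by move=> a _ [r ->]; exists (a * r); rewrite scalerA.
Qed.

Definition sum_submod (U W : V -> Prop) (x : V) := exists u w, [/\ U u, W w & x = u + w].

Lemma sum_gsubmod U W : gsubmod hd U -> gsubmod hd W -> gsubmod hd (sum_submod U W).
Proof.
move=> [[U0 UB UZ] UC] [[W0 WB WZ] WC]; split; first split.
- by exists 0, 0; rewrite addr0.
- move=> _ _ [u1 [w1 [? ? ->]]] [u2 [w2 [? ? ->]]]; exists (u1 - u2), (w1 - w2).
  by split; [apply: UB | apply: WB | rewrite opprD addrACA].
- move=> a _ [u [w [? ? ->]]]; exists (a *: u), (a *: w).
  by split; [apply: UZ | apply: WZ | rewrite scalerDr].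
- move=> _ n [u [w [? ? ->]]]; exists (hcomp hd n u), (hcomp hd n w).
  by split; [apply: UC | apply: WC | rewrite hcompD].
Qed.

Lemma sum_submod_uniq (U W : V -> Prop) u w u' w' : submod_pred U -> submod_pred W ->
  (forall x, U x -> W x -> x = 0) -> U u -> W w -> U u' -> W w' -> u + w = u' + w' -> u = u'.
Proof.
move=> [_ UB _] [_ WB _] UW0 Uu Ww Uu' Ww' e.
have e' : u - u' = w' - w.
  have : (u + w) - (u' + w') = 0 by rewrite e subrr.
  by rewrite opprD addrACA => /eqP; rewrite addr_eq0 => /eqP ->; rewrite opprB.
by apply/eqP; rewrite -subr_eq0; apply/eqP/UW0; [apply: UB | rewrite e'; apply: WB].
Qed.

End CyclicAndSumSubmodules.

Lemma cyclic_gsubmod (A : comNzRingType) (GA : int -> pred A) (hA : pos_graded_ring GA)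
  (V : lmodType A) (GV : int -> pred V) (hV : graded_module GA GV) j (m : V) :
  m \in GV j -> gsubmod (mod_decomp hV) (cyclic_submod m).
Proof.
move=> hm; split; first exact: cyclic_submodP.
by move=> _ n [r ->]; exists (hcomp (ring_decomp hA) (n - j) r); apply: hcompZr.
Qed.

Section InjectiveExtension.
Variables (A : comNzRingType) (GA : int -> pred A) (hA : pos_graded_ring GA).
Variables (E : lmodType A) (GE : int -> pred E) (hE : graded_module GA GE)
  (hinj : gr_injective GA GE).

Lemma gr_injective_extend (Y : lmodType A) (GY : int -> pred Y) (hY : graded_module GA GY)
  (U : Y -> Prop) (hU : gsubmod (mod_decomp hY) U) (h : Y -> E) :
  (forall a u v, U u -> U v -> h (a *: u + v) = a *: h u + h v) ->
  (forall n u, U u -> u \in GY n -> h u \in GE n) ->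
  exists g : {linear Y -> E}, graded_map_deg GY GE 0 g /\ forall u, U u -> g u = h u.
Proof.
move=> h_lin h_deg.
pose GU : int -> pred (sub_lmod hU.1) := fun n => [pred x | sub_val hU.1 x \in GY n].
have hi : graded_map_deg GU GY 0 (sub_val hU.1) by move=> n x; rewrite add0r.
have hf : graded_map_deg GU GE 0 (sub_restr_linear hU.1 h_lin).
  by move=> n x; rewrite add0r inE; apply: (h_deg _ _ (sub_valP x)).
have [g [hg gE]] := hinj (sub_graded hU) hY hi val_inj hf.
by exists g; split => // u Uu; apply: (gE (sub_mk hU.1 Uu)).
Qed.

Lemma gr_injective_extend_cyclic (M : lmodType A) (GM : int -> pred M)
  (hM : graded_module GA GM) j k (m : M) (y : E) :
  m \in GM j -> y \in GE k -> (forall r : A, r *: m = 0 -> r *: y = 0) ->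
  exists d (f : {linear M -> E}), graded_map_deg GM GE d f /\ f m = y.
Proof.
move=> hm hy ann; pose e := j - k.
have hM' := shift_graded hM e.
have hm' : m \in GM (k + e) by rewrite /e addrC subrK.
pose h x := xget 0 [set r : A | x = r *: m] *: y.
have hmul r : h (r *: m) = r *: y.
  rewrite /h; case: xgetP => [r' _ /= er|/(_ r erefl)//].
  by apply/eqP; rewrite -subr_eq0 -scalerBl ann // scalerBl -er subrr.
have [g [hg gE]] : exists g : {linear M -> E},
    graded_map_deg (fun n => GM (n + e)) GE 0 g /\ forall u, cyclic_submod m u -> g u = h u.
  apply: (gr_injective_extend (cyclic_gsubmod hA hM' hm')).
    move=> a _ _ [r1 ->] [r2 ->].
    by rewrite scalerA -scalerDl !hmul scalerDl scalerA.
  move=> n _ [r ->] hr; rewrite -(hcomp_id (mod_decomp hM') hr) (hcompZr hA hM' _ _ hm') hmul.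
  by rewrite -[n in GE n](subrK k); apply: (graded_scale hE (hcomp_in _ _ _) hy).
have Cm : cyclic_submod m m by exists 1; rewrite scale1r.
exists (- e), g; split; last by rewrite gE // -[m in h m]scale1r hmul scale1r.
by move=> t x; have := hg (t - e) x; rewrite add0r subrK addrC.
Qed.

Lemma gr_injective_retract (V C : E -> Prop) :
  gsubmod (mod_decomp hE) V -> gsubmod (mod_decomp hE) C -> (forall w, V w -> C w -> w = 0) ->
  exists phi : {linear E -> E}, [/\ graded_map_deg GE GE 0 phi,
    forall v, V v -> phi v = v & forall c, C c -> phi c = 0].
Proof.
move=> gV gC VC0; pose hd := mod_decomp hE.
pose h w := xget 0 [set v | V v /\ exists c, C c /\ w = v + c].
have hP v c : V v -> C c -> h (v + c) = v.
  move=> Vv Cc; rewrite /h; case: xgetP => [v' _ [Vv' [c' [Cc' e]]]|/(_ v)]; last first.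
    by case; split => //; exists c.
  by apply: (sum_submod_uniq gV.1 gC.1 VC0 Vv' Cc' Vv Cc); rewrite -e.
have h_lin a u v : sum_submod V C u -> sum_submod V C v -> h (a *: u + v) = a *: h u + h v.
  move=> [v1 [c1 [Vv1 Cc1 ->]]] [v2 [c2 [Vv2 Cc2 ->]]].
  have Vv := submod_pred_lin a gV.1 Vv1 Vv2; have Cc := submod_pred_lin a gC.1 Cc1 Cc2.
  by rewrite scalerDr addrACA !hP.
have h_deg n w : sum_submod V C w -> w \in GE n -> h w \in GE n.
  move=> [v [c [Vv Cc ->]]] hw.
  have e : hcomp hd n v + hcomp hd n c = v + c by rewrite -hcompD (hcomp_id hd hw).
  by rewrite -e hP; [apply: hcomp_in | apply: gV.2 | apply: gC.2].
have [phi [hphi phiE]] := gr_injective_extend (sum_gsubmod gV gC) h_lin h_deg.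
have [[V0 _ _] _] := gV; have [[C0 _ _] _] := gC.
exists phi; split=> [//|v Vv|c Cc].
  have Sv : sum_submod V C (v + 0) by exists v, 0.
  by rewrite -[v in phi v]addr0 phiE // hP.
have Sc : sum_submod V C (0 + c) by exists 0, c.
by rewrite -[c in phi c]add0r phiE // hP.
Qed.

End InjectiveExtension.

Section ZornGradedSubmodule.
Variables (A : comNzRingType) (V : lmodType A) (GV : int -> pred V) (hd : graded_decomp GV).
Local Open Scope classical_set_scope.

Lemma bigcup_gsubmod (F : set (set V)) : (forall W, F W -> gsubmod hd W) ->
  total_on F subset -> (exists W, F W) -> gsubmod hd (\bigcup_(W in F) W).
Proof.
move=> FG tot [W0 FW0]; have [[W00 _ _] _] := FG _ FW0; split; first split.
- by exists W0.
- move=> x y [W1 FW1 W1x] [W2 FW2 W2y].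
  have [[_ B1 _] _] := FG _ FW1; have [[_ B2 _] _] := FG _ FW2.
  case: (tot _ _ FW1 FW2) => s12.
  + by exists W2 => //; apply: B2 => //; apply: s12.
  + by exists W1 => //; apply: B1 => //; apply: s12.
- by move=> a x [W FW Wx]; exists W => //; have [[_ _ Z] _] := FG _ FW; apply: Z.
- by move=> x n [W FW Wx]; exists W => //; apply: (FG _ FW).2.
Qed.

Variables (Q : set V -> Prop) (B0 : set V) (gB0 : gsubmod hd B0) (QB0 : Q B0)
  (Qchain : forall F : set (set V), (forall W, F W -> gsubmod hd W /\ Q W) ->
     total_on F subset -> (exists W, F W) -> Q (\bigcup_(W in F) W)).

Lemma zorn_gsubmod : exists W, [/\ gsubmod hd W, Q W &
  forall W', gsubmod hd W' -> Q W' -> W `<=` W' -> W' `<=` W].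
Proof.
(* Zorn's lemma needs a property of all chains, including the empty one. *)
pose P (W : set V) := W = set0 \/ gsubmod hd W /\ Q W.
have hP F : F `<=` P -> total_on F subset -> P (\bigcup_(W in F) W).
  move=> FP tot; have [[W1 [FW1 [v W1v]]]|nF] := pselect (exists W, F W /\ W !=set0).
    pose F' W := F W /\ W !=set0.
    have FQ W : F' W -> gsubmod hd W /\ Q W by move=> [/FP[->[]|]].
    have -> : \bigcup_(W in F) W = \bigcup_(W in F') W.
      by apply/seteqP; split=> x [W FW Wx]; exists W => //; [split=> //; exists x | case: FW].
    have tot' : total_on F' subset by rewrite /F' => W1' W2' [? _] [? _]; apply: tot.
    have ne' : exists W, F' W by exists W1; split=> //; exists v.
    rewrite /P; right; split; last exact: (Qchain FQ tot' ne').
    by apply: (bigcup_gsubmod _ tot' ne') => W /FQ[].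
  rewrite /P; left; apply/seteqP; split=> [x [W FW Wx]|//].
  by apply: nF; exists W; split=> //; exists x.
have [W [PW maxW]] := Zorn_bigcup hP.
case: PW => [W0 | [gW QW]].
  have [[B00 _ _] _] := gB0.
  by exfalso; apply: (maxW B0); [rewrite W0; split=> // /(_ 0 B00) | right].
exists W; split=> // W' gW' QW' sW v W'v; apply: contrapT => nWv.
by apply: (maxW W'); [split=> // /(_ v W'v) | right].
Qed.

End ZornGradedSubmodule.

Section Uniform.
Variables (A : comNzRingType) (GA : int -> pred A) (hA : pos_graded_ring GA).
Variables (E : lmodType A) (GE : int -> pred E) (hE : graded_module GA GE).
Local Notation hd := (mod_decomp hE).
Local Open Scope classical_set_scope.

Definition essential_over (x : E) (W : set E) := forall w n, W w -> w \in GE n -> w != 0 ->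
  exists r s : A, r *: w = s *: x /\ r *: w != 0.

Section Retraction.
Variables (x : E) (V C : set E) (gV : gsubmod hd V) (gC : gsubmod hd C).
Hypotheses (Vx : V x) (essV : essential_over x V)
  (maxV : forall W, gsubmod hd W -> W x /\ essential_over x W -> V `<=` W -> W `<=` V)
  (maxC : forall W, gsubmod hd W -> (forall w, W w -> V w -> w = 0) -> C `<=` W -> W `<=` C).
Variables (phi : {linear E -> E}) (hphi : graded_map_deg GE GE 0 phi).
Hypotheses (phiV : forall v, V v -> phi v = v) (phiC : forall c, C c -> phi c = 0).

Lemma hcomp_retract n w : phi (hcomp hd n w) = hcomp hd n (phi w).
Proof. by rewrite (hcomp_map hd hd hphi) subr0. Qed.

Lemma retract_kernel w : phi w = 0 -> C w.
Proof.
apply: (maxC (W := fun w => phi w = 0)) => [|w' hw Vw|]; last 2 first.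
- by rewrite -(phiV Vw).
- exact: phiC.
split; first split.
- exact: raddf0.
- by move=> a b ha hb; rewrite raddfB /= ha hb subrr.
- by move=> a w' hw; rewrite linearZ /= hw scaler0.
- by move=> w' n hw; rewrite hcomp_retract hw hcomp0.
Qed.

(* For homogeneous [z = phi u'], [C + A u'] meets [V] (else maximality of [C] puts [u']
   in [C] and [z = 0]); [phi] maps a homogeneous point of the meet to a multiple of [z]. *)
Lemma retract_image_essential : essential_over x (fun w => exists u, w = phi u).
Proof.
move=> _ n [u ->] hz nz; pose u' := hcomp hd n u.
have zu' : phi u' = phi u by rewrite hcomp_retract hcomp_id.
have hu' : u' \in GE n by apply: hcomp_in.
pose B := sum_submod C (cyclic_submod u').
have gB : gsubmod hd B := sum_gsubmod gC (cyclic_gsubmod hA hE hu').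
have [_ [[c [_ [Cc [r ->] ->]]] Vw nw]] : exists w, [/\ B w, V w & w != 0].
  apply: contrapT => noBV; suff Cu' : C u' by move: nz; rewrite -zu' phiC ?eqxx.
  have [[C0 _ _] _] := gC.
  apply: (maxC gB) => [w Bw Vw|c Cc|].
  - by apply: contrapT => nw; apply: noBV; exists w; split=> //; apply/eqP.
  - by exists c, 0; split=> //; [exists 0; rewrite scale0r | rewrite addr0].
  - by exists 0, u'; split=> //; [exists 1; rewrite scale1r | rewrite add0r].
have [k nk] := hcomp_neq0 hd nw; set wk := hcomp hd k _ in nk.
have Vwk : V wk by apply: gV.2.
have ewk : wk = hcomp (ring_decomp hA) (k - n) r *: phi u.
  rewrite -zu' -linearZ -(phiV Vwk) /wk hcompD raddfD /= phiC ?add0r; last by apply: gC.2.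
  by rewrite (hcompZr hA hE _ _ hu').
have [r2 [s2 [e2 n2]]] := essV Vwk (hcomp_in hd k _) nk.
by exists (r2 * hcomp (ring_decomp hA) (k - n) r), s2; rewrite -scalerA -ewk.
Qed.

Lemma retract_image u : V (phi u).
Proof.
apply: (maxV (image_gsubmod hd hd hphi)); last by exists u.
- by split; [exists x; rewrite phiV | exact: retract_image_essential].
- by move=> v Vv; exists v; rewrite phiV.
Qed.

Lemma retract_decomp w : exists v c, V v /\ C c /\ w = v + c.
Proof.
have Vw := retract_image w.
exists (phi w), (w - phi w); do !split=> //; last by rewrite addrC subrK.
by apply: retract_kernel; rewrite raddfB /= (phiV Vw) subrr.
Qed.

End Retraction.

Hypotheses (hinj : gr_injective GA GE) (hind : gr_indecomposable GE).

(* Take [V] maximal among graded submodules containing [x] and essential over [A x],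
   and [C] maximal with [V :&: C = 0]: the injectivity of [E] makes [E = V (+) C]. *)
Lemma indecomposable_essential_over i (x : E) : x \in GE i -> x != 0 -> essential_over x setT.
Proof.
move=> hx nx.
have [V [gV [Vx essV] maxV]] : exists V, [/\ gsubmod hd V, V x /\ essential_over x V &
    forall W, gsubmod hd W -> W x /\ essential_over x W -> V `<=` W -> W `<=` V].
  apply: (zorn_gsubmod (cyclic_gsubmod hA hE hx)).
  - split; first by exists 1; rewrite scale1r.
    by move=> _ n [r ->] _ nz; exists 1, r; rewrite scale1r.
  - move=> F hF tot [W0 FW0]; split; first by exists W0 => //; case: (hF _ FW0) => _ [].
    by move=> w n [W FW Ww]; case: (hF _ FW) => _ [_]; apply.
have [C [gC VC0 maxC]] : exists C, [/\ gsubmod hd C, (forall w, C w -> V w -> w = 0) &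
    forall W, gsubmod hd W -> (forall w, W w -> V w -> w = 0) -> C `<=` W -> W `<=` C].
  apply: (zorn_gsubmod (B0 := fun w => w = 0)) => //.
  - split; first split => //.
    + by move=> _ _ -> ->; rewrite subrr.
    + by move=> a _ ->; rewrite scaler0.
    + by move=> _ n ->; rewrite hcomp0.
  - by move=> F hF _ _ w [W FW Ww]; apply: (hF _ FW).2.
have VC0' w : V w -> C w -> w = 0 by move=> Vw Cw; apply: VC0.
have [phi [hphi phiV phiC]] := gr_injective_retract hinj gV gC VC0'.
have dec := retract_decomp gV gC Vx essV maxV maxC hphi phiV phiC.
have [V0|C0] := hind.2 V C (gsubmod_graded gV) (gsubmod_graded gC) VC0' dec.
  by move: nx; rewrite (V0 x Vx) eqxx.
move=> w n _; have [v [c [Vv [/C0 -> ->]]]] := dec w; rewrite addr0.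
exact: essV.
Qed.

Lemma indecomposable_uniform i j (x y : E) : x \in GE i -> y \in GE j -> x != 0 -> y != 0 ->
  exists k (z : E), [/\ z \in GE k, z != 0,
    forall r : A, r *: x = 0 -> r *: z = 0 & forall r : A, r *: y = 0 -> r *: z = 0].
Proof.
move=> hx hy nx ny.
have [r [s [e ne]]] := indecomposable_essential_over hx nx I hy ny.
have [k nk] := hcomp_neq0 hd ne.
exists k, (hcomp hd k (r *: y)); split=> [|//|t tx|t ty]; first exact: hcomp_in.
  by rewrite e (hcompZr hA hE _ _ hx) scalerA mulrC -scalerA tx scaler0.
by rewrite (hcompZr hA hE _ _ hy) scalerA mulrC -scalerA ty scaler0.
Qed.

End Uniform.

Section AssociatedPrime.
Variables (A : comNzRingType) (GA : int -> pred A) (hA : pos_graded_ring GA).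
Variables (E : lmodType A) (GE : int -> pred E) (hE : graded_module GA GE)
  (hinj : gr_injective GA GE) (hind : gr_indecomposable GE).

Lemma P_of_ann r (x : E) : x != 0 -> homogeneous GE x -> r *: x = 0 -> P_of GE r.
Proof.
move=> nx hx rx; exists [:: (r, x)]; split; last by rewrite big_seq1.
by move=> p; rewrite inE => /eqP ->.
Qed.

Lemma uniform_common_ann k0 (z0 : E) (ys : seq E) : z0 \in GE k0 -> z0 != 0 ->
  (forall y, y \in ys -> y != 0 /\ homogeneous GE y) ->
  exists k (z : E), [/\ z \in GE k, z != 0,
    forall r : A, r *: z0 = 0 -> r *: z = 0 &
    forall y (r : A), y \in ys -> r *: y = 0 -> r *: z = 0].
Proof.
move=> hz0 nz0; elim: ys => [|y ys IH] hys; first by exists k0, z0; split.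
have [k [z [hz nz ann0 annys]]] := IH (fun y' hy' => hys y' (mem_behead (s := y :: ys) hy')).
have [ny [ky hy]] := hys y (mem_head _ _).
have [k' [z' [hz' nz' annz anny]]] := indecomposable_uniform hA hE hinj hind hz hy nz ny.
exists k', z'; split=> // [r /ann0 /annz //|y' r].
by rewrite inE => /predU1P[-> /anny //|hy' /(annys _ _ hy') /annz].
Qed.

Lemma P_of_common_ann (cs : seq A) : (forall c, c \in cs -> P_of GE c) ->
  exists k (z : E), [/\ z \in GE k, z != 0 & forall c, c \in cs -> c *: z = 0].
Proof.
elim: cs => [|c cs IH] hcs.
  have [x nx] := hind.1; have [k nk] := hcomp_neq0 (mod_decomp hE) nx.
  by exists k, (hcomp (mod_decomp hE) k x); split=> //; apply: hcomp_in.
have [k [z [hz nz annz]]] := IH (fun c' hc' => hcs c' (mem_behead (s := c :: cs) hc')).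
have [s [hs ->]] := hcs c (mem_head _ _).
have hys y : y \in map snd s -> y != 0 /\ homogeneous GE y.
  by case/mapP => p /hs[? [? _]] ->.
have [k' [z' [hz' nz' ann0 anns]]] := uniform_common_ann hz nz hys.
exists k', z'; split=> // c'; rewrite inE => /predU1P[->|/annz /ann0 //].
rewrite scaler_suml big1_seq // => p ps; have [_ [_ ann]] := hs p ps.
by apply: (anns p.2) => //; apply: map_f.
Qed.

Lemma P_of_neq1 : ~ P_of GE 1.
Proof.
move=> P1; have hc1 c : c \in [:: 1] -> P_of GE c by rewrite inE => /eqP ->.
have [k [z [_ nz hz]]] := P_of_common_ann hc1.
by move: nz; rewrite -(scale1r z) hz ?mem_head ?eqxx.
Qed.

End AssociatedPrime.

Definition ann_fin_gen (A : comNzRingType) (M : lmodType A) (GM : int -> pred M) :=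
  forall (m : M) j, m \in GM j -> exists (J : finType) (b : J -> A), (forall l, b l *: m = 0) /\
    (forall r, r *: m = 0 -> exists t : J -> A, r = \sum_l t l * b l).

Section HullComparison.
Variables (A : comNzRingType) (GA : int -> pred A) (hA : pos_graded_ring GA).
Variables (E : lmodType A) (GE : int -> pred E) (hE : graded_module GA GE)
  (hinj : gr_injective GA GE) (hind : gr_indecomposable GE).
Variables (EP : lmodType A) (GEP : int -> pred EP) (hEP : graded_module GA GEP)
  (hEPinj : gr_injective GA GEP) (e : EP) (he : e \in GEP 0)
  (annE : forall a : A, a *: e = 0 <-> P_of GE a)
  (essE : forall U : EP -> Prop, graded_submodule GEP U -> (exists x, U x /\ x != 0) ->
    exists a : A, a *: e != 0 /\ U (a *: e)).
Variables (M : lmodType A) (GM : int -> pred M) (hM : graded_module GA GM).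

Lemma hull_generator_neq0 : e != 0.
Proof.
by apply/eqP => e0; apply: (P_of_neq1 hA hE hinj hind); apply/annE; rewrite e0 scaler0.
Qed.

Lemma gHom_nonzero_to_hull : gHom_nonzero GM GE -> gHom_nonzero GM GEP.
Proof.
move=> [d [f [hf [x nx]]]].
have [n] := hcomp_neq0 (mod_decomp hE) nx; rewrite (hcomp_map (mod_decomp hM) _ hf).
set m := hcomp _ _ x => nfm; have hm : m \in GM (n - d) by apply: hcomp_in.
have ann r : r *: m = 0 -> r *: e = 0.
  move=> rm; apply/annE; apply: (P_of_ann nfm); first by exists (d + (n - d)); apply: hf.
  by rewrite -linearZ /= rm linear0.
have [d' [g [hg gm]]] := gr_injective_extend_cyclic hA hEP hEPinj hM hm he ann.
by exists d', g; split=> //; exists m; rewrite gm hull_generator_neq0.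
Qed.

Lemma hull_hom_image_generator : gHom_nonzero GM GEP ->
  exists d (f : {linear M -> EP}) j (m : M) n (a : A),
    [/\ graded_map_deg GM GEP d f, m \in GM j, a \in GA n, f m = a *: e & a *: e != 0].
Proof.
move=> [d [f [hf [x nx]]]]; pose hd := mod_decomp hEP.
have gU := image_gsubmod (mod_decomp hM) hd hf.
have [a [nae [u eu]]] : exists a, a *: e != 0 /\ exists u, a *: e = f u.
  by apply: (essE (gsubmod_graded gU)); exists (f x); split=> //; exists x.
have [n] := hcomp_neq0 hd nae; rewrite (hcompZr hA hEP _ _ he) subr0.
set a' := hcomp _ n a => na'e.
exists d, f, (n - d), (hcomp (mod_decomp hM) (n - d) u), n, a'; split=> //.
- exact: hcomp_in.
- exact: hcomp_in.
by rewrite -(hcomp_map (mod_decomp hM) hd hf) -eu (hcompZr hA hEP _ _ he) subr0.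
Qed.

Lemma gHom_nonzero_from_hull : ann_fin_gen GM -> gHom_nonzero GM GEP -> gHom_nonzero GM GE.
Proof.
move=> hfg /hull_hom_image_generator[d [f [j [m [n [a [hf hm ha fm nae]]]]]]].
have [J [b [hb annb]]] := hfg m j hm.
have Pba c : c \in [seq b l * a | l <- enum J] -> P_of GE c.
  by case/mapP => l _ ->; apply/annE; rewrite -scalerA -fm -linearZ /= hb linear0.
have [k [z [hz nz hcz]]] := P_of_common_ann hA hE hinj hind Pba.
have naz : a *: z != 0.
  apply/eqP => az0; move/eqP: nae; apply; apply/annE.
  by apply: (P_of_ann nz) => //; exists k.
have ann r : r *: m = 0 -> r *: (a *: z) = 0.
  move=> /annb[t ->]; rewrite scaler_suml big1 // => l _.
  by rewrite scalerA -mulrA -scalerA hcz ?scaler0 //; apply: map_f; rewrite mem_enum.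
have [d' [g [hg gm]]] := gr_injective_extend_cyclic hA hE hinj hM hm (graded_scale hE ha hz) ann.
by exists d', g; split=> //; exists m; rewrite gm.
Qed.

End HullComparison.

Section Relations.
Variables (A : comNzRingType).

Lemma sum_mul_sum (I J : finType) (f : I -> J -> A) (x : J -> A) :
  \sum_j (\sum_i f i j) * x j = \sum_i \sum_j f i j * x j.
Proof. by rewrite exchange_big /=; apply: eq_bigr => j _; rewrite mulr_suml. Qed.

Lemma sum_mul_delta (K : finType) (t : K -> A) i : \sum_i0 t i0 * (i0 == i)%:R = t i.
Proof.
by rewrite (bigD1 i) //= eqxx mulr1 big1 ?addr0 // => i0 /negPf ->; rewrite mulr0.
Qed.

Lemma sum_mulA (I L : finType) (f : L -> A) (g : L -> I -> A) (h : I -> A) :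
  \sum_i (\sum_l f l * g l i) * h i = \sum_l f l * (\sum_i g l i * h i).
Proof.
rewrite sum_mul_sum; apply: eq_bigr => l _; rewrite mulr_sumr.
by apply: eq_bigr => i _; rewrite mulrA.
Qed.

Definition relations_fin_gen (K : finType) (p : K -> A) :=
  exists (J : finType) (z : J -> K -> A), (forall l, \sum_i z l i * p i = 0) /\
    (forall t, \sum_i t i * p i = 0 -> exists s : J -> A, forall i, t i = \sum_l s l * z l i).

(* The relations of [p] are generated by those of [g] pulled back along [beta],
   together with the relations [e_i0 - alpha i0 * beta]. *)
Lemma relations_fin_gen_transfer (K L : finType) (p : K -> A) (g : L -> A)
    (alpha : K -> L -> A) (beta : L -> K -> A) :
  (forall i, p i = \sum_j alpha i j * g j) -> (forall j, g j = \sum_i beta j i * p i) ->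
  relations_fin_gen g -> relations_fin_gen p.
Proof.
move=> ealpha ebeta [J [r [hrel hgen]]].
pose z (l : J + K) (i : K) : A := match l with
  | inl k => \sum_j r k j * beta j i
  | inr i0 => (i0 == i)%:R - \sum_j alpha i0 j * beta j i end.
have alpha_beta i0 : \sum_i (\sum_j alpha i0 j * beta j i) * p i = p i0.
  by rewrite sum_mulA ealpha; apply: eq_bigr => j _; rewrite ebeta.
exists (J + K)%type, z; split.
  case=> [k|i0] /=.
    by rewrite sum_mulA -[RHS](hrel k); apply: eq_bigr => j _; rewrite ebeta.
  under eq_bigr do rewrite mulrBl; rewrite sumrB alpha_beta.
  rewrite (bigD1 i0) //= eqxx mul1r big1 ?addr0 ?subrr // => i /negPf.
  by rewrite eq_sym => ->; rewrite mul0r.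
move=> t ht; pose a j := \sum_i t i * alpha i j.
have [s hs] : exists s : J -> A, forall j, a j = \sum_k s k * r k j.
  apply: hgen; rewrite /a sum_mul_sum -[RHS]ht; apply: eq_bigr => i _.
  by rewrite ealpha mulr_sumr; apply: eq_bigr => j _; rewrite mulrA.
exists (fun l => match l with inl k => s k | inr i0 => t i0 end) => i.
rewrite big_sumType /=.
have e1 : \sum_i0 t i0 * (\sum_j alpha i0 j * beta j i) = \sum_j a j * beta j i.
  by rewrite -sum_mulA.
have e2 : \sum_k s k * (\sum_j r k j * beta j i) = \sum_j a j * beta j i.
  by rewrite -sum_mulA; apply: eq_bigr => j _; rewrite hs.
under [X in _ = _ + X]eq_bigr do rewrite mulrBr; rewrite sumrB sum_mul_delta.
by rewrite e1 e2 addrC subrK.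
Qed.

End Relations.

Section GradedSyzygies.
Variables (A : comNzRingType) (GA : int -> pred A) (hA : pos_graded_ring GA).
Local Notation hdA := (ring_decomp hA).

Definition is_syzygy (K : finType) n (w : K -> 'I_n -> A) (t : K -> A) :=
  forall j, \sum_i t i * w i j = 0.

Definition in_row_span (K : finType) n (w : K -> 'I_n -> A) (v : 'I_n -> A) :=
  exists t : K -> A, forall j, v j = \sum_i t i * w i j.

(* The row span of [w] is a graded submodule of (+)_j A(-c j). *)
Definition graded_row_span (K : finType) n (w : K -> 'I_n -> A) (c : 'I_n -> int) :=
  forall v, in_row_span w v -> forall d, in_row_span w (fun j => hcomp hdA (d - c j) (v j)).

Definition syzygies_fin_gen (K : finType) n (w : K -> 'I_n -> A) :=
  exists (J : finType) (z : J -> K -> A), (forall l, is_syzygy w (z l)) /\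
    (forall t, is_syzygy w t -> exists s : J -> A, forall i, t i = \sum_l s l * z l i).

Lemma coherent_relations_fin_gen (hcoh : gr_coherent GA) (K : finType) (p : K -> A) :
  (forall a d, (exists t : K -> A, a = \sum_i t i * p i) ->
    exists t : K -> A, hcomp hdA d a = \sum_i t i * p i) ->
  relations_fin_gen p.
Proof.
move=> hI; pose I (a : A^o) := exists t : K -> A, a = \sum_i t i * p i.
have Ip i : I (p i).
  exists (fun k => (k == i)%:R); rewrite (bigD1 i) //= eqxx mul1r big1 ?addr0 // => k /negPf ->.
  by rewrite mul0r.
have gI : gsubmod (V := A^o) hdA I.
  split=> //; split.
  - by exists (fun _ => 0); rewrite big1 // => i _; rewrite mul0r.
  - move=> _ _ [t1 ->] [t2 ->]; exists (fun i => t1 i - t2 i).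
    by rewrite -sumrB; apply: eq_bigr => i _; rewrite mulrBl.
  - move=> a _ [t ->]; exists (fun i => a * t i).
    by rewrite [_ *: _]mulr_sumr; apply: eq_bigr => i _; rewrite mulrA.
have hfg : exists n (g : 'I_n -> A^o), (forall j, I (g j)) /\
    forall x, I x -> exists a : 'I_n -> A^o, x = \sum_j a j * g j.
  exists #|K|, (fun j => p (enum_val j)); split=> // _ [t ->].
  exists (fun j => t (enum_val j)); rewrite -(big_enum_val (A := predT) (fun i => t i * p i)).
  by apply: eq_bigl => i; rewrite inE.
have [n [g [deg [hg [hsp [m [r [_ [_ [hrel hgen]]]]]]]]]] := hcoh I (gsubmod_graded gI) hfg.
have [beta ebeta] := choice (fun j => (hg j).1).
have [alpha ealpha] := choice (fun i => hsp _ (Ip i)).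
by apply: (relations_fin_gen_transfer ealpha ebeta); exists 'I_m, r.
Qed.

Lemma homog_graded_row_span (K : finType) n (w : K -> 'I_n -> A) (c : 'I_n -> int)
    (deg : K -> int) :
  (forall i j, w i j \in GA (deg i - c j)) -> graded_row_span w c.
Proof.
move=> hw v [t ht] d; exists (fun i => hcomp hdA (d - deg i) (t i)) => j.
rewrite ht hcomp_sum; apply: eq_bigr => i _.
by rewrite (hcompMr hA _ _ (hw i j)); congr (hcomp _ _ _ * _); lia.
Qed.

Section LastColumn.
Variables (K : finType) (n : nat) (w : K -> 'I_n.+1 -> A).
Variables (J : finType) (z : J -> K -> A) (hz : forall l, \sum_i z l i * w i ord_max = 0)
  (gz : forall t, \sum_i t i * w i ord_max = 0 ->
     exists s : J -> A, forall i, t i = \sum_l s l * z l i).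

Definition other_columns (l : J) (j : 'I_n) := \sum_i z l i * w i (lift ord_max j).

Lemma other_columns_graded c : graded_row_span w c ->
  graded_row_span other_columns (fun j => c (lift ord_max j)).
Proof.
move=> gw v [s hs] d; pose T i := \sum_l s l * z l i.
have [t' ht'] := gw _ (ex_intro _ T (fun j => erefl)) d.
have [s' hs'] : exists s' : J -> A, forall i, t' i = \sum_l s' l * z l i.
  apply: gz; rewrite -ht' /T sum_mulA big1 ?hcomp0 // => l _.
  by rewrite hz mulr0.
exists s' => j; rewrite hs /other_columns -sum_mulA ht' -sum_mulA.
by apply: eq_bigr => i _; rewrite hs'.
Qed.

Lemma syzygies_from_other_columns : syzygies_fin_gen other_columns -> syzygies_fin_gen w.
Proof.
move=> [J2 [z2 [hz2 gz2]]].
exists J2, (fun l2 i => \sum_l z2 l2 l * z l i); split.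
  move=> l2 j; rewrite sum_mulA; case: (unliftP ord_max j) => [j'|] ->; last first.
    by rewrite big1 // => l _; rewrite hz mulr0.
  exact: hz2.
move=> t ht; have [s hs] := gz (ht ord_max).
have [s' hs'] : exists s' : J2 -> A, forall l, s l = \sum_l2 s' l2 * z2 l2 l.
  apply: gz2 => j; rewrite /other_columns -sum_mulA -[RHS](ht (lift ord_max j)).
  by apply: eq_bigr => i _; rewrite hs.
by exists s' => i; rewrite hs -sum_mulA; apply: eq_bigr => l _; rewrite hs'.
Qed.

End LastColumn.

(* Induction on the number of columns: the last column spans a graded ideal, whose
   relations are finitely generated by coherence. *)
Lemma coherent_syzygies_fin_gen (hcoh : gr_coherent GA) n :
  forall (K : finType) (w : K -> 'I_n -> A) (c : 'I_n -> int),
  graded_row_span w c -> syzygies_fin_gen w.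
Proof.
elim: n => [|n IH] K w c gw.
  exists K, (fun l i => (l == i)%:R); split=> [l []//|t _].
  by exists t => i; rewrite sum_mul_delta.
have [J [z [hz gz]]] : relations_fin_gen (fun i => w i ord_max).
  apply: (coherent_relations_fin_gen hcoh) => a d [t ea].
  have [t' ht'] := gw _ (ex_intro _ t (fun j => erefl)) (d + c ord_max).
  by exists t'; rewrite -ht' addrK ea.
apply: (syzygies_from_other_columns hz gz).
exact: (IH _ _ _ (other_columns_graded hz gz gw)).
Qed.

End GradedSyzygies.

Section FinitelyPresented.
Variables (A : comNzRingType) (GA : int -> pred A) (hA : pos_graded_ring GA).
Variables (M : lmodType A) (GM : int -> pred M) (hM : graded_module GA GM).

Lemma homog_coeffs n (g : 'I_n -> M) (c : 'I_n -> int) (a : 'I_n -> A) j (m : M) :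
  (forall i, g i \in GM (c i)) -> m \in GM j -> m = \sum_i a i *: g i ->
  m = \sum_i hcomp (ring_decomp hA) (j - c i) (a i) *: g i.
Proof.
move=> hg hm em; rewrite -(hcomp_id (mod_decomp hM) hm) {1}em hcomp_sum.
by apply: eq_bigr => i _; rewrite (hcompZr hA hM _ _ (hg i)).
Qed.

(* Ann(m) is the projection to the first coordinate of the syzygies of the rows
   (coefficients of m) and (relations of M). *)
Lemma fin_pres_ann_fin_gen : gr_coherent GA -> gr_fin_pres GA GM -> ann_fin_gen GM.
Proof.
move=> hcoh [n [g [c [hg [hsp [m [r [b [hr [hrel hgen]]]]]]]]]] m0 j0 hm0.
have [a ea] := hsp m0 I.
pose a' i := hcomp (ring_decomp hA) (j0 - c i) (a i).
have ea' : m0 = \sum_i a' i *: g i := homog_coeffs (fun i => (hg i).2) hm0 ea.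
pose w (k : 'I_1 + 'I_m) : 'I_n -> A := match k with inl _ => a' | inr k => r k end.
pose deg (k : 'I_1 + 'I_m) : int := match k with inl _ => j0 | inr k => b k end.
have hw k i : w k i \in GA (deg k - c i) by case: k => [_|k] /=; [apply: hcomp_in | apply: hr].
have [J [z [hz gz]]] := coherent_syzygies_fin_gen hcoh (homog_graded_row_span hA hw).
exists J, (fun l => z l (inl ord0)); split.
  move=> l; have hzl i : z l (inl ord0) * a' i = - \sum_k z l (inr k) * r k i.
    by apply/eqP; rewrite -addr_eq0; apply/eqP; have := hz l i; rewrite big_sumType /= big_ord1.
  rewrite ea' scaler_sumr; under eq_bigr do rewrite scalerA hzl scaleNr scaler_suml.
  rewrite sumrN exchange_big /= big1 ?oppr0 // => k _.
  by under eq_bigr do rewrite -scalerA; rewrite -scaler_sumr hrel scaler0.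
move=> rr hrr.
have [t ht] : exists t : 'I_m -> A, forall i, rr * a' i = \sum_k t k * r k i.
  apply: hgen; rewrite -[RHS]hrr [in RHS]ea' scaler_sumr.
  by apply: eq_bigr => i _; rewrite scalerA.
pose tau (k : 'I_1 + 'I_m) : A := match k with inl _ => rr | inr k => - t k end.
have [s hs] : exists s : J -> A, forall k, tau k = \sum_l s l * z l k.
  apply: gz => i; rewrite big_sumType /= big_ord1 /= ht -big_split big1 // => k _.
  by rewrite /= -mulrDl subrr mul0r.
by exists s; have := hs (inl ord0).
Qed.

End FinitelyPresented.

Theorem theorem3p9 (A : comNzRingType) (GA : int -> pred A)
  (hA : pos_graded_ring GA) (hcoh : gr_coherent GA)
  (E : lmodType A) (GE : int -> pred E) (hE : graded_module GA GE)
  (hinj : gr_injective GA GE) (hind : gr_indecomposable GE)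
  (EP : lmodType A) (GEP : int -> pred EP)
  (hEP : gr_injective_hull_of_quotient GA (P_of GE) GEP) :
  forall (M : lmodType A) (GM : int -> pred M),
    graded_module GA GM -> gr_fin_pres GA GM ->
    (gHom_nonzero GM GE <-> gHom_nonzero GM GEP).
Proof.
move=> M GM hM hfp; have [hEP' [hEPinj [e [he [annE essE]]]]] := hEP.
split; first exact: (gHom_nonzero_to_hull hA hE hinj hind hEP' hEPinj he annE hM).
apply: (gHom_nonzero_from_hull hA hE hinj hind hEP' he annE essE hM).
exact: (fin_pres_ann_fin_gen hA hM hcoh hfp).
Qed.
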